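(* Let $\mathbf A$ be an integral interior $r\ell u$-groupoid and $\mathbf B$ a finite partial subalgebra of $\mathbf A$. Then the algebra $\mathbf F^+_{\mathbf A,\mathbf B}$ is finite.
   Context: An $r\ell u$-groupoid is an algebra $(A,\wedge,\vee,\cdot,\backslash,/,1)$ with $(A,\wedge,\vee)$ a lattice (order $\le$), $(A,\cdot,1)$ a unital groupoid (binary operation, not necessarily associative, with two-sided unit $1$), and $x\cdot y\le z\iff y\le x\backslash z\iff x\le z/y$. An interior $r\ell u$-groupoid has in addition a unary $!$ with $1\le !1$, $!x\cdot!y\le !(x\cdot y)$, $!x\le x$, $!x\le !!x$, $x\le y\Rightarrow !x\le !y$; integral means $x\le 1$ for all $x$. A partial subalgebra $\mathbf B$ of $\mathbf A$ is a subset $B\subseteq A$ with $f^{\mathbf B}(\vec b)=f^{\mathbf A}(\vec b)$ if this lies in $B$, undefined otherwise. Enriched frames. An enriched $ru$-frame is $\mathbf F=(G,T,N,K)$ where $(G,\cdot,\varepsilon)$ is a unital groupoid, $T$ a set, $N\subseteq G\times T$ a nuclear relation (for all $x,y\in G$, $z\in T$ there exist $x\backslash\!\!\backslash z,\ z/\!\!/y\in T$ with $x\cdot y\,N\,z\iff y\,N\,x\backslash\!\!\backslash z\iff x\,N\,z/\!\!/y$), and $K$ a sub-unital-groupoid of $G$. For $X\subseteq G$, $Y\subseteq T$: $X^{\rhd}=\{t\in T\mid \forall x\in X\,(x N t)\}$, $Y^{\lhd}=\{g\in G\mid\forall y\in Y\,(g N y)\}$, $\gamma_N(X)=X^{\rhd\lhd}$;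 $X$ is closed if $\gamma_N(X)=X$. $\mathbf F^+$ is the algebra whose universe is the set of closed sets, with $X\wedge Y=X\cap Y$, $X\vee Y=\gamma_N(X\cup Y)$, $X\cdot Y=\gamma_N(X\circ Y)$ where $X\circ Y=\{x\cdot y\mid x\in X,y\in Y\}$, $X\backslash Y=\{z\in G\mid X\circ\{z\}\subseteq Y\}$, $Y/X=\{z\in G\mid \{z\}\circ X\subseteq Y\}$, $!X=\gamma_N(X\cap K)$, unit $\gamma_N(\{\varepsilon\})$. The frame $\mathbf F_{\mathbf A,\mathbf B}=(G_B,T_B,N_B,K_B)$: $G_B$ is the sub-unital-groupoid of $(A,\cdot,1)$ generated by $B$; $U_{G_B}$ is the set of unary linear polynomials over $G_B$, i.e. maps $G_B\to G_B$ given by a groupoid term in which one variable occurs exactly once and all other leaves are elements of $G_B$ (including the identity map $\mathrm{id}$); $T_B=U_{G_B}\times B$; $x\,N_B\,(u,b)$ iff $u(x)\le^{\mathbf A}b$; $K_B$ is the sub-unital-groupoid of $(A,\cdot,1)$ generated by $\{!^{\mathbf A}b\mid b\in B,\ !^{\mathbf A}b\in B\}$. ($N_B$ is nuclear with $x\backslash\!\!\backslash(u,b)=(u(x\cdot\_),b)$ and $(u,b)/\!\!/y=(u(\_\cdot y),b)$.) *)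

From Stdlib Require Import List.
Set Implicit Arguments.

Definition rle {A : Type} (meet : A -> A -> A) (x y : A) : Prop := meet x y = x.

Record is_interior_rlu_groupoid {A : Type}
  (meet join mul ldiv rdiv : A -> A -> A) (one : A) (bang : A -> A) : Prop := {
  meet_comm : forall x y, meet x y = meet y x;
  meet_assoc : forall x y z, meet x (meet y z) = meet (meet x y) z;
  join_comm : forall x y, join x y = join y x;
  join_assoc : forall x y z, join x (join y z) = join (join x y) z;
  absorb_mj : forall x y, meet x (join x y) = x;
  absorb_jm : forall x y, join x (meet x y) = x;
  mul_one_l : forall x, mul one x = x;
  mul_one_r : forall x, mul x one = x;
  resid_ldiv : forall x y z, rle meet (mul x y) z <-> rle meet y (ldiv x z);
  resid_rdiv : forall x y z, rle meet (mul x y) z <-> rle meet x (rdiv z y);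
  bang_one : rle meet one (bang one);
  bang_mul : forall x y, rle meet (mul (bang x) (bang y)) (bang (mul x y));
  bang_deflat : forall x, rle meet (bang x) x;
  bang_idem : forall x, rle meet (bang x) (bang (bang x));
  bang_mono : forall x y, rle meet x y -> rle meet (bang x) (bang y)
}.

Definition integral {A : Type} (meet : A -> A -> A) (one : A) : Prop :=
  forall x, rle meet x one.

(** A finite subset (a partial subalgebra is determined by its underlying subset) *)
Definition finite_set {A : Type} (B : A -> Prop) : Prop :=
  exists l : list A, forall x, B x <-> In x l.

Definition rhd {G T : Type} (TT : T -> Prop) (N : G -> T -> Prop) (X : G -> Prop)
  : T -> Prop := fun t => TT t /\ forall x, X x -> N x t.
Definition lhd {G T : Type} (GG : G -> Prop) (N : G -> T -> Prop) (Y : T -> Prop)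
  : G -> Prop := fun g => GG g /\ forall y, Y y -> N g y.
Definition gammaN {G T : Type} (GG : G -> Prop) (TT : T -> Prop) (N : G -> T -> Prop)
  (X : G -> Prop) : G -> Prop := lhd GG N (rhd TT N X).

Definition closed_set {G T : Type} (GG : G -> Prop) (TT : T -> Prop) (N : G -> T -> Prop)
  (X : G -> Prop) : Prop :=
  (forall x, X x -> GG x) /\ (forall x, gammaN GG TT N X x <-> X x).

Definition finitely_many_closed {G T : Type} (GG : G -> Prop) (TT : T -> Prop)
  (N : G -> T -> Prop) : Prop :=
  exists l : list (G -> Prop),
    forall X, closed_set GG TT N X -> exists Y, In Y l /\ forall x, X x <-> Y x.

Inductive gen_subgroupoid {A : Type} (mul : A -> A -> A) (one : A) (B : A -> Prop)
  : A -> Prop :=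
| gsg_base : forall b, B b -> gen_subgroupoid mul one B b
| gsg_one : gen_subgroupoid mul one B one
| gsg_mul : forall x y, gen_subgroupoid mul one B x -> gen_subgroupoid mul one B y ->
            gen_subgroupoid mul one B (mul x y).

(** A groupoid term in which the variable
    occurs exactly once is (up to evaluating its closed subterms, which lie in
    G_B) a hole, or c * p, or p * c with p linear and c a constant. *)
Inductive lpoly (A : Type) : Type :=
| LHole : lpoly A
| LMulL : A -> lpoly A -> lpoly A
| LMulR : lpoly A -> A -> lpoly A.

Fixpoint lp_eval {A : Type} (mul : A -> A -> A) (p : lpoly A) (x : A) : A :=
  match p with
  | LHole _ => x
  | LMulL c q => mul c (lp_eval mul q x)
  | LMulR q c => mul (lp_eval mul q x) c
  end.

Fixpoint lp_over {A : Type} (GG : A -> Prop) (p : lpoly A) : Prop :=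
  match p with
  | LHole _ => True
  | LMulL c q => GG c /\ lp_over GG q
  | LMulR q c => lp_over GG q /\ GG c
  end.

Definition G_B {A : Type} (mul : A -> A -> A) (one : A) (B : A -> Prop) : A -> Prop :=
  gen_subgroupoid mul one B.

Definition T_B {A : Type} (mul : A -> A -> A) (one : A) (B : A -> Prop)
  : lpoly A * A -> Prop :=
  fun ub => lp_over (G_B mul one B) (fst ub) /\ B (snd ub).

Definition N_B {A : Type} (meet mul : A -> A -> A) (x : A) (ub : lpoly A * A) : Prop :=
  rle meet (lp_eval mul (fst ub) x) (snd ub).

(** K_B (part of the frame; not needed for the universe of F^+) *)
Definition K_B {A : Type} (mul : A -> A -> A) (one : A) (bang : A -> A) (B : A -> Prop)
  : A -> Prop :=
  gen_subgroupoid mul one (fun a => exists b, B b /\ bang b = a /\ B (bang b)).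

(** The algebra F^+_{A,B} is finite: its universe (the N_B-closed subsets of G_B)
    is finite. *)
Definition FplusAB_finite {A : Type} (meet mul : A -> A -> A) (one : A) (B : A -> Prop)
  : Prop :=
  finitely_many_closed (G_B mul one B) (T_B mul one B) (N_B meet mul).

(* Every element of G_B is the value of a binary tree with leaves in B ∪ {1}, and every
   linear polynomial over G_B is a tree context.  Integrality gives x·y ≤ x and x·y ≤ y,
   so the value map reverses homeomorphic embedding of trees; hence, for b ∈ B, the trees
   of value ≤ b form an upward closed set, which by Kruskal's tree theorem (proved here by
   Nash-Williams' minimal bad sequence argument) has a finite basis.  Whether a tree m
   embeds into C[s] depends only on a proposition independent of s and on which subtrees
   of m embed into s.  So every basic set {x ∈ G_B | u(x) ≤ b} is determined by a subset
   of one fixed finite set of trees, and the closed sets, being intersections of basic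
   sets, are finitely many. *)

From Stdlib Require Import Arith List Lia Classical ClassicalEpsilon.
Import ListNotations.
Set Implicit Arguments.

(** * Good sequences and minimal bad sequences *)

Definition strictly_increasing (s : nat -> nat) : Prop := forall k, s k < s (S k).

Lemma strictly_increasing_lt s : strictly_increasing s -> forall i j, i < j -> s i < s j.
Proof.
  intros Hs i j Hij. induction Hij as [|j _ IH]; [apply Hs|specialize (Hs j); lia].
Qed.

Definition infinitely_often (Q : nat -> Prop) : Prop := forall N, exists n, N <= n /\ Q n.

Lemma not_infinitely_often Q : ~ infinitely_often Q -> exists N, forall n, N <= n -> ~ Q n.
Proof.
  intros H. apply not_all_ex_not in H as [N HN].
  exists N. intros n Hn HQ. apply HN. eauto.
Qed.

Lemma infinitely_often_or_not Q : infinitely_often Q \/ infinitely_often (fun n => ~ Q n).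
Proof.
  destruct (classic (infinitely_often Q)) as [H|H]; [now left|right].
  apply not_infinitely_often in H as [N0 HN0].
  intro N. exists (max N N0). split; [lia|apply HN0; lia].
Qed.

Lemma infinitely_often_subsequence Q :
  infinitely_often Q -> exists s, strictly_increasing s /\ forall k, Q (s k).
Proof.
  intros H.
  set (next := fun N => epsilon (inhabits 0) (fun n => N <= n /\ Q n)).
  assert (Hnext : forall N, N <= next N /\ Q (next N)) by (intro N; apply epsilon_spec, H).
  exists (fix s k := match k with 0 => next 0 | S k => next (S (s k)) end).
  split; [intro k; apply Hnext|intros [|k]; apply Hnext].
Qed.

Lemma least_nat (P : nat -> Prop) :
  (exists n, P n) -> exists n, P n /\ forall m, P m -> n <= m.
Proof.
  intros H.
  destruct (dec_inh_nat_subset_has_unique_least_element P (fun n => classic (P n)) H)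
    as [n [Hn _]].
  exists n. exact Hn.
Qed.

Lemma pigeonhole X (L : list X) (f : nat -> X) :
  (forall n, In (f n) L) -> exists i j, i < j /\ f i = f j.
Proof.
  revert f. induction L as [|a L IH]; intros f Hf; [destruct (Hf 0)|].
  destruct (classic (infinitely_often (fun n => f n = a))) as [Ha|Ha].
  - destruct (Ha 0) as [i [_ Hi]], (Ha (S i)) as [j [Hj Hj']].
    exists i, j. split; [lia|congruence].
  - apply not_infinitely_often in Ha as [N HN].
    destruct (IH (fun n => f (N + n))) as [i [j [Hij E]]].
    + intro n. destruct (Hf (N + n)) as [E|E]; [exfalso; apply (HN (N + n)); auto; lia|exact E].
    + exists (N + i), (N + j). split; [lia|exact E].
Qed.

Section GoodSequences.
Variables (X : Type) (R : X -> X -> Prop).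

Definition good (f : nat -> X) : Prop := exists i j, i < j /\ R (f i) (f j).

Lemma good_subsequence f s :
  strictly_increasing s -> good (fun k => f (s k)) -> good f.
Proof.
  intros Hs [i [j [Hij HR]]]. exists (s i), (s j).
  split; [apply strictly_increasing_lt|]; assumption.
Qed.

Lemma chain_of_good_subsequences f :
  (forall s, strictly_increasing s -> good (fun k => f (s k))) ->
  exists s, strictly_increasing s /\ forall k, R (f (s k)) (f (s (S k))).
Proof.
  intros Hgood.
  set (terminal := fun n => forall j, n < j -> ~ R (f n) (f j)).
  destruct (classic (infinitely_often terminal)) as [Hinf|Hfin].
  - exfalso. destruct (infinitely_often_subsequence Hinf) as [s [Hs Hterm]].
    destruct (Hgood s Hs) as [i [j [Hij HR]]].
    apply (Hterm i (s j)); [apply strictly_increasing_lt|]; assumption.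
  - apply not_infinitely_often in Hfin as [N HN].
    assert (Hsucc : forall n, N <= n -> exists j, n < j /\ R (f n) (f j)).
    { intros n Hn. apply NNPP; intro Hno. apply (HN n Hn). intros j Hj HR. eauto. }
    set (next := fun n => epsilon (inhabits 0) (fun j => n < j /\ R (f n) (f j))).
    assert (Hnext : forall n, N <= n -> n < next n /\ R (f n) (f (next n)))
      by (intros n Hn; apply epsilon_spec, Hsucc, Hn).
    set (s := fix s k := match k with 0 => N | S k => next (s k) end).
    assert (HsN : forall k, N <= s k).
    { induction k as [|k IH]; simpl; [lia|]. destruct (Hnext _ IH). lia. }
    exists s. split; intro k; apply Hnext, HsN.
Qed.

Lemma chain_lt (Rtrans : forall x y z, R x y -> R y z -> R x z) f :
  (forall k, R (f k) (f (S k))) -> forall i j, i < j -> R (f i) (f j).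
Proof.
  intros Hf i j Hij. induction Hij as [|j _ IH]; [apply Hf|eapply Rtrans; eauto].
Qed.

Variable P : X -> Prop.

Definition bad (f : nat -> X) : Prop := (forall n, P (f n)) /\ ~ good f.

Definition agree_below (f h : nat -> X) (n : nat) : Prop := forall i, i < n -> h i = f i.

Section MinimalBad.
Variable size : X -> nat.

Definition minimal_extension (f : nat -> X) (n : nat) (h : nat -> X) : Prop :=
  bad h /\ agree_below f h n /\
  forall h', bad h' -> agree_below f h' n -> size (h n) <= size (h' n).

Lemma minimal_extension_exists f n : bad f -> exists h, minimal_extension f n h.
Proof.
  intros Hf.
  destruct (least_nat (fun k => exists h, bad h /\ agree_below f h n /\ size (h n) = k))
    as [k [[h [Hh [Hagree Hk]]] Hleast]].
  { exists (size (f n)), f. split; [exact Hf|split; [intros i _|]; reflexivity]. }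
  exists h. split; [exact Hh|split; [exact Hagree|]].
  intros h' Hh' Hagree'. rewrite Hk. apply Hleast. eauto.
Qed.

Definition extend_minimally (f : nat -> X) (n : nat) : nat -> X :=
  epsilon (inhabits f) (minimal_extension f n).

Lemma extend_minimally_spec f n : bad f -> minimal_extension f n (extend_minimally f n).
Proof. intros Hf. exact (epsilon_spec _ _ (minimal_extension_exists n Hf)). Qed.

(* [minimal_approx f0 (S n)] fixes the first [n] terms and minimises the size of the [n]-th. *)
Fixpoint minimal_approx (f0 : nat -> X) (n : nat) : nat -> X :=
  match n with 0 => f0 | S m => extend_minimally (minimal_approx f0 m) m end.

Lemma minimal_approx_spec f0 : bad f0 ->
  forall n, minimal_extension (minimal_approx f0 n) n (minimal_approx f0 (S n)).
Proof.
  intros H0 n.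
  induction n as [|n IH]; apply extend_minimally_spec; [exact H0|apply IH].
Qed.

Lemma minimal_approx_stable f0 : bad f0 ->
  forall n m i, n <= m -> i <= n -> minimal_approx f0 (S m) i = minimal_approx f0 (S n) i.
Proof.
  intros H0 n m i Hnm Hi. induction Hnm as [|m Hnm IH]; [reflexivity|].
  destruct (minimal_approx_spec H0 (S m)) as [_ [Hagree _]].
  rewrite Hagree by lia. exact IH.
Qed.

Theorem minimal_bad f0 : bad f0 ->
  exists g, bad g /\
    forall n h, bad h -> agree_below g h n -> size (g n) <= size (h n).
Proof.
  intros H0. exists (fun n => minimal_approx f0 (S n) n).
  assert (Hg : forall n i, i <= n -> minimal_approx f0 (S n) i = minimal_approx f0 (S i) i)
    by (intros; apply minimal_approx_stable; auto).
  split; [split|].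
  - intro n. destruct (minimal_approx_spec H0 n) as [[HP _] _]. apply HP.
  - intros [i [j [Hij HR]]]. destruct (minimal_approx_spec H0 j) as [[_ Hbad] _].
    apply Hbad. exists i, j. split; [exact Hij|]. rewrite Hg by lia. exact HR.
  - intros n h Hh Hagree. destruct (minimal_approx_spec H0 n) as [_ [_ Hmin]].
    apply Hmin; [exact Hh|]. intros i Hi. rewrite Hagree by exact Hi.
    destruct n as [|n]; [lia|]. symmetry. apply Hg. lia.
Qed.

End MinimalBad.

Hypothesis wqo : forall f, (forall n, P (f n)) -> good f.

Lemma finite_basis (D : X -> Prop) : (forall x, D x -> P x) ->
  exists M, (forall m, In m M -> D m) /\ forall x, D x -> exists m, In m M /\ R m x.
Proof.
  intros HD. destruct (classic (exists x, D x)) as [[x0 Hx0]|Hempty].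
  2:{ exists nil. split; [intros m []|]. intros x Hx. exfalso. eauto. }
  apply NNPP; intro Hno.
  set (fresh := fun M x => D x /\ forall m, In m M -> ~ R m x).
  assert (Hfresh : forall M, (forall m, In m M -> D m) -> exists x, fresh M x).
  { intros M HM. apply NNPP; intro H. apply Hno. exists M. split; [exact HM|].
    intros x Hx. apply NNPP; intro H'. apply H. exists x. split; [exact Hx|].
    intros m Hm HR. eauto. }
  set (pick := fun M => epsilon (inhabits x0) (fresh M)).
  set (prefix := fix prefix n := match n with 0 => nil | S n => pick (prefix n) :: prefix n end).
  assert (Hprefix : forall n,
    (forall m, In m (prefix n) -> D m) /\ fresh (prefix n) (pick (prefix n))).
  { intro n. enough (H : forall m, In m (prefix n) -> D m)
      by (split; [exact H|apply epsilon_spec, Hfresh, H]).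
    induction n as [|n IH]; [intros m []|]. intros m [<-|Hm]; [|apply IH, Hm].
    apply (epsilon_spec (inhabits x0) (fresh (prefix n)) (Hfresh _ IH)). }
  assert (Hin : forall i j, i < j -> In (pick (prefix i)) (prefix j)).
  { intros i j Hij. induction Hij; [left; reflexivity|right; assumption]. }
  destruct (wqo (fun n => pick (prefix n))) as [i [j [Hij HR]]].
  { intro n. apply HD, Hprefix. }
  apply (proj2 (proj2 (Hprefix j)) _ (Hin i j Hij) HR).
Qed.

End GoodSequences.

(** * Kruskal's theorem for binary trees *)

Section Trees.
Variable A : Type.

Inductive tree : Type := Lf (a : A) | Nd (l r : tree).

Inductive emb : tree -> tree -> Prop :=
| emb_leaf a : emb (Lf a) (Lf a)
| emb_left s l r : emb s l -> emb s (Nd l r)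
| emb_right s l r : emb s r -> emb s (Nd l r)
| emb_node s1 s2 l r : emb s1 l -> emb s2 r -> emb (Nd s1 s2) (Nd l r).

Lemma emb_refl t : emb t t.
Proof. induction t; constructor; assumption. Qed.

Lemma emb_Nd_iff m l r : emb m (Nd l r) <->
  emb m l \/ emb m r \/ match m with Nd m1 m2 => emb m1 l /\ emb m2 r | Lf _ => False end.
Proof.
  split.
  - intro H. inversion H; subst; tauto.
  - intros [H|[H|H]]; [now apply emb_left|now apply emb_right|].
    destruct m as [|m1 m2]; [contradiction|destruct H; now apply emb_node].
Qed.

Lemma emb_trans s t u : emb s t -> emb t u -> emb s u.
Proof.
  intros Hst Htu. revert s Hst.
  induction Htu as [a|t l r _ IH|t l r _ IH|t1 t2 l r _ IH1 _ IH2]; intros s Hst.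
  - exact Hst.
  - apply emb_left, IH, Hst.
  - apply emb_right, IH, Hst.
  - apply emb_Nd_iff in Hst as [H|[H|H]]; [apply emb_left, IH1, H|apply emb_right, IH2, H|].
    destruct s as [|s1 s2]; [contradiction|destruct H; apply emb_node; auto].
Qed.

Fixpoint size (t : tree) : nat :=
  match t with Lf _ => 1 | Nd l r => S (size l + size r) end.

Definition child (c p : tree) : Prop := exists u, p = Nd c u \/ p = Nd u c.

Variable labels : list A.

Fixpoint lab (t : tree) : Prop :=
  match t with Lf a => In a labels | Nd l r => lab l /\ lab r end.

Lemma minimal_bad_children_good g :
  bad emb lab g ->
  (forall n h, bad emb lab h -> agree_below g h n -> size (g n) <= size (h n)) ->
  forall c phi, (forall k, child (c k) (g (phi k))) -> good emb c.
Proof.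
  intros [Hg Hgbad] Hmin c phi Hc. apply NNPP; intro Hcbad.
  destruct (least_nat (fun v => exists k, phi k = v)) as [v [[k0 Hk0] Hv]];
    [exists (phi 0), 0; reflexivity|].
  assert (Hclab : forall k, lab (c k)).
  { intro k. generalize (Hg (phi k)). destruct (Hc k) as [u [-> | ->]]; simpl; tauto. }
  assert (Hcemb : forall k x, emb x (c k) -> emb x (g (phi k))).
  { intros k x. destruct (Hc k) as [u [-> | ->]]; [apply emb_left|apply emb_right]. }
  (* splice: keep [g] below [v], then continue with the children from index [k0] on *)
  set (h := fun i => if lt_dec i v then g i else c (k0 + (i - v))).
  assert (Hh : bad emb lab h).
  { split.
    - intro i. unfold h. destruct (lt_dec i v); [apply Hg|apply Hclab].
    - intros [i [j [Hij He]]]. unfold h in He.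
      destruct (lt_dec i v), (lt_dec j v); try lia.
      + apply Hgbad. exists i, j. auto.
      + apply Hgbad. exists i, (phi (k0 + (j - v))). split; [|apply Hcemb, He].
        assert (v <= phi (k0 + (j - v))) by (apply Hv; eauto). lia.
      + apply Hcbad. exists (k0 + (i - v)), (k0 + (j - v)). split; [lia|exact He]. }
  assert (Hagree : agree_below g h v).
  { intros i Hi. unfold h. destruct (lt_dec i v); [reflexivity|contradiction]. }
  specialize (Hmin v h Hh Hagree). unfold h in Hmin.
  destruct (lt_dec v v) as [Hvv|_]; [lia|]. rewrite Nat.sub_diag, Nat.add_0_r in Hmin.
  destruct (Hc k0) as [u [E|E]]; rewrite Hk0 in E; rewrite E in Hmin; simpl in Hmin; lia.
Qed.

Definition is_leaf (t : tree) : Prop := match t with Lf _ => True | Nd _ _ => False end.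
Definition left_child (t : tree) : tree := match t with Nd l _ => l | Lf _ => t end.
Definition right_child (t : tree) : tree := match t with Nd _ r => r | Lf _ => t end.

Theorem kruskal f : (forall n, lab (f n)) -> good emb f.
Proof.
  intros Hf. apply NNPP; intro Hfbad.
  destruct (minimal_bad size (conj Hf Hfbad)) as [g [Hg Hmin]].
  pose proof (minimal_bad_children_good Hg Hmin) as Hchildren.
  destruct Hg as [Hglab Hgbad]. apply Hgbad.
  destruct (infinitely_often_or_not (fun n => is_leaf (g n))) as [Hio|Hio];
    destruct (infinitely_often_subsequence Hio) as [s [Hs Hsk]]; cbv beta in Hsk;
    apply (good_subsequence _ Hs).
  - destruct (pigeonhole (map (@Lf) labels) (fun k => g (s k))) as [i [j [Hij E]]].
    { intro k. specialize (Hsk k). specialize (Hglab (s k)).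
      destruct (g (s k)) as [a|]; [apply in_map, Hglab|contradiction]. }
    exists i, j. split; [exact Hij|]. rewrite E. apply emb_refl.
  - set (l := fun k => left_child (g (s k))). set (r := fun k => right_child (g (s k))).
    assert (Hlr : forall k, g (s k) = Nd (l k) (r k)).
    { intro k. specialize (Hsk k). unfold l, r.
      destruct (g (s k)); [exfalso; apply Hsk; exact I|reflexivity]. }
    destruct (chain_of_good_subsequences (R := emb) l) as [t [Ht Hchain]].
    { intros t Ht. apply (Hchildren _ (fun k => s (t k))).
      intro k. exists (r (t k)). left. apply Hlr. }
    destruct (Hchildren (fun k => r (t k)) (fun k => s (t k))) as [i [j [Hij Hr]]].
    { intro k. exists (l (t k)). right. apply Hlr. }
    apply (good_subsequence (fun k => g (s k)) Ht).
    exists i, j. split; [exact Hij|]. rewrite !Hlr.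
    apply emb_node; [apply (chain_lt emb emb_trans (fun k => l (t k)) Hchain Hij)|exact Hr].
Qed.

End Trees.

(** * Embeddings into filled contexts *)

Section Contexts.
Variable A : Type.

Fixpoint subtrees (t : tree A) : list (tree A) :=
  t :: match t with Lf _ => [] | Nd l r => subtrees l ++ subtrees r end.

Inductive context : Type :=
| Hole
| CtxL (t : tree A) (C : context)
| CtxR (C : context) (t : tree A).

Fixpoint fill (C : context) (s : tree A) : tree A :=
  match C with
  | Hole => s
  | CtxL t C => Nd t (fill C s)
  | CtxR C t => Nd (fill C s) t
  end.

Definition covers (L : list (tree A)) (s : tree A) : Prop := exists m, In m L /\ emb m s.

Definition upset (c : Prop) (L : list (tree A)) (s : tree A) : Prop := c \/ covers L s.

Lemma covers_app L1 L2 s : covers (L1 ++ L2) s <-> covers L1 s \/ covers L2 s.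
Proof.
  unfold covers. split.
  - intros [m [Hm He]]. apply in_app_or in Hm as [Hm|Hm]; eauto.
  - intros [[m [Hm He]]|[m [Hm He]]]; exists m; split; auto using in_or_app.
Qed.

Lemma covers_cons m L s : covers (m :: L) s <-> emb m s \/ covers L s.
Proof.
  change (m :: L) with ([m] ++ L). rewrite covers_app.
  unfold covers. simpl. firstorder congruence.
Qed.

Definition upset_preimage (F : tree A -> tree A) (m : tree A) : Prop :=
  exists c L, incl L (subtrees m) /\ forall s, emb m (F s) <-> upset c L s.

Lemma upset_preimage_CtxL t F : (forall m, upset_preimage F m) ->
  forall m, upset_preimage (fun s => Nd t (F s)) m.
Proof.
  intros HF [a|m1 m2].
  - destruct (HF (Lf a)) as [c [L [HL E]]].
    exists (emb (Lf a) t \/ c), L. split; [exact HL|].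
    intro s. rewrite emb_Nd_iff, E. unfold upset. tauto.
  - destruct (HF (Nd m1 m2)) as [c1 [L1 [HL1 E1]]], (HF m2) as [c2 [L2 [HL2 E2]]].
    assert (Hsub : incl (subtrees m2) (subtrees (Nd m1 m2)))
      by (apply incl_tl, incl_appr, incl_refl).
    destruct (classic (emb m1 t)) as [Ht|Ht].
    + exists (emb (Nd m1 m2) t \/ c1 \/ c2), (L1 ++ L2).
      split; [apply incl_app; [exact HL1|exact (incl_tran HL2 Hsub)]|].
      intro s. rewrite emb_Nd_iff, E1, E2. unfold upset. rewrite covers_app. tauto.
    + exists (emb (Nd m1 m2) t \/ c1), L1. split; [exact HL1|].
      intro s. rewrite emb_Nd_iff, E1. unfold upset. tauto.
Qed.

Lemma upset_preimage_CtxR t F : (forall m, upset_preimage F m) ->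
  forall m, upset_preimage (fun s => Nd (F s) t) m.
Proof.
  intros HF [a|m1 m2].
  - destruct (HF (Lf a)) as [c [L [HL E]]].
    exists (emb (Lf a) t \/ c), L. split; [exact HL|].
    intro s. rewrite emb_Nd_iff, E. unfold upset. tauto.
  - destruct (HF (Nd m1 m2)) as [c1 [L1 [HL1 E1]]], (HF m1) as [c2 [L2 [HL2 E2]]].
    assert (Hsub : incl (subtrees m1) (subtrees (Nd m1 m2)))
      by (apply incl_tl, incl_appl, incl_refl).
    destruct (classic (emb m2 t)) as [Ht|Ht].
    + exists (emb (Nd m1 m2) t \/ c1 \/ c2), (L1 ++ L2).
      split; [apply incl_app; [exact HL1|exact (incl_tran HL2 Hsub)]|].
      intro s. rewrite emb_Nd_iff, E1, E2. unfold upset. rewrite covers_app. tauto.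
    + exists (emb (Nd m1 m2) t \/ c1), L1. split; [exact HL1|].
      intro s. rewrite emb_Nd_iff, E1. unfold upset. tauto.
Qed.

Lemma upset_preimage_fill C : forall m, upset_preimage (fill C) m.
Proof.
  induction C as [|t C IH|C IH t]; intro m.
  - exists False, [m]. split; [intros x [<-|[]]; destruct m; left; reflexivity|].
    intro s. unfold upset. rewrite covers_cons. unfold covers. simpl. firstorder.
  - exact (upset_preimage_CtxL t IH m).
  - exact (upset_preimage_CtxR t IH m).
Qed.

Lemma covers_fill_upset C M : exists c L,
  incl L (flat_map subtrees M) /\ forall s, covers M (fill C s) <-> upset c L s.
Proof.
  induction M as [|m M [c2 [L2 [HL2 E2]]]].
  - exists False, []. split; [intros x []|]. intro s. unfold upset, covers. simpl. firstorder.
  - destruct (upset_preimage_fill C m) as [c1 [L1 [HL1 E1]]].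
    exists (c1 \/ c2), (L1 ++ L2). split; [apply incl_app_app; assumption|].
    intro s. rewrite covers_cons, E1, E2. unfold upset. rewrite covers_app. tauto.
Qed.

Variable labels : list A.

Fixpoint ctx_lab (C : context) : Prop :=
  match C with
  | Hole => True
  | CtxL t C => lab labels t /\ ctx_lab C
  | CtxR C t => ctx_lab C /\ lab labels t
  end.

Lemma lab_fill C s : ctx_lab C -> lab labels s -> lab labels (fill C s).
Proof. induction C; simpl; tauto. Qed.

Fixpoint tree_eval (op : A -> A -> A) (t : tree A) : A :=
  match t with Lf a => a | Nd l r => op (tree_eval op l) (tree_eval op r) end.

End Contexts.

Arguments Hole {A}.

Section Groupoid.
Variables (A : Type) (meet join mul ldiv rdiv : A -> A -> A) (one : A) (bang : A -> A).
Hypothesis HA : is_interior_rlu_groupoid meet join mul ldiv rdiv one bang.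

Lemma rle_refl x : rle meet x x.
Proof.
  unfold rle. pose proof (absorb_mj HA x (meet x x)) as E.
  rewrite (absorb_jm HA x x) in E. exact E.
Qed.

Lemma rle_trans x y z : rle meet x y -> rle meet y z -> rle meet x z.
Proof.
  unfold rle. intros Hxy Hyz. rewrite <- Hxy at 1. rewrite <- (meet_assoc HA), Hyz. exact Hxy.
Qed.

Lemma mul_mono_l x y z : rle meet x y -> rle meet (mul x z) (mul y z).
Proof.
  intros H. apply (resid_rdiv HA). eapply rle_trans; [exact H|].
  apply (resid_rdiv HA), rle_refl.
Qed.

Lemma mul_mono_r x y z : rle meet x y -> rle meet (mul z x) (mul z y).
Proof.
  intros H. apply (resid_ldiv HA). eapply rle_trans; [exact H|].
  apply (resid_ldiv HA), rle_refl.
Qed.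

Hypothesis Hint : integral meet one.

Lemma emb_eval_antitone s t : emb s t -> rle meet (tree_eval mul t) (tree_eval mul s).
Proof.
  induction 1 as [a|s l r _ IH|s l r _ IH|s1 s2 l r _ IH1 _ IH2]; simpl.
  - apply rle_refl.
  - eapply rle_trans; [|exact IH].
    rewrite <- (mul_one_r HA (tree_eval mul l)) at 2. apply mul_mono_r, Hint.
  - eapply rle_trans; [|exact IH].
    rewrite <- (mul_one_l HA (tree_eval mul r)) at 2. apply mul_mono_l, Hint.
  - eapply rle_trans; [apply mul_mono_l, IH1|apply mul_mono_r, IH2].
Qed.

End Groupoid.

Fixpoint sublists X (l : list X) : list (list X) :=
  match l with [] => [[]] | a :: l => map (cons a) (sublists l) ++ sublists l end.

Lemma sublists_select X (l : list X) (P : X -> Prop) :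
  exists l', In l' (sublists l) /\ forall x, In x l' <-> In x l /\ P x.
Proof.
  induction l as [|a l [l' [Hin Hl']]]; simpl.
  - exists []. split; [left; reflexivity|]. simpl. tauto.
  - destruct (classic (P a)) as [Ha|Ha].
    + exists (a :: l'). split; [apply in_or_app; left; apply in_map, Hin|].
      intro x. simpl. rewrite Hl'. split; [intros [<-|H]|intros [[<-|H] HP]]; tauto.
    + exists l'. split; [apply in_or_app; right; exact Hin|].
      intro x. rewrite Hl'. split; [tauto|intros [[<-|H] HP]; tauto].
Qed.

(* Closed sets are intersections of basic sets [{x | GG x /\ N x t}]. *)
Lemma finitely_many_closed_of_basic G T (GG : G -> Prop) (TT : T -> Prop)
  (N : G -> T -> Prop) (l : list (G -> Prop)) :
  (forall t, TT t -> exists Y, In Y l /\ forall x, GG x /\ N x t <-> Y x) ->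
  finitely_many_closed GG TT N.
Proof.
  intros Hbasic.
  exists (map (fun Ys x => GG x /\ forall Y, In Y Ys -> Y x) (sublists l)).
  intros X [HXG HXc].
  destruct (sublists_select l (fun Y => forall x, X x -> Y x)) as [Ys [HYs HYsiff]].
  exists (fun x => GG x /\ forall Y, In Y Ys -> Y x).
  split; [exact (in_map (fun Ys x => GG x /\ forall Y, In Y Ys -> Y x) _ _ HYs)|].
  intro x. split.
  - intro Hx. split; [apply HXG, Hx|]. intros Y HY. apply HYsiff in HY. apply HY, Hx.
  - intros [Hx HY]. apply HXc. split; [exact Hx|].
    intros t [Ht HtX]. destruct (Hbasic t Ht) as [Y [HYl HYiff]].
    assert (HYx : Y x).
    { apply HY, HYsiff. split; [exact HYl|].
      intros z Hz. apply HYiff. split; [apply HXG, Hz|apply HtX, Hz]. }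
    apply HYiff in HYx as [_ HN]. exact HN.
Qed.

Lemma list_choice X Y (Q : X -> list Y -> Prop) (l : list X) :
  (forall x, In x l -> exists K, Q x K) ->
  exists K0, forall x, In x l -> exists K, Q x K /\ incl K K0.
Proof.
  induction l as [|a l IH]; intros H; [exists []; intros x []|].
  destruct (H a (in_eq a l)) as [Ka HKa], IH as [K0 HK0]; [intros x Hx; apply H, in_cons, Hx|].
  exists (Ka ++ K0). intros x [<-|Hx].
  - exists Ka. split; [exact HKa|apply incl_appl, incl_refl].
  - destruct (HK0 x Hx) as [K [HK Hincl]]. exists K. split; [exact HK|apply incl_appr, Hincl].
Qed.

(** * The frame F_{A,B} *)

Section Frame.
Variables (A : Type) (meet join mul ldiv rdiv : A -> A -> A) (one : A) (bang : A -> A).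
Hypothesis HA : is_interior_rlu_groupoid meet join mul ldiv rdiv one bang.
Hypothesis Hint : integral meet one.
Variables (B : A -> Prop) (lB : list A).
Hypothesis HlB : forall x, B x <-> In x lB.

Let labels := one :: lB.

Lemma G_B_iff_tree x : G_B mul one B x <-> exists s, lab labels s /\ tree_eval mul s = x.
Proof.
  split.
  - induction 1 as [b Hb| |x y _ [s1 [H1 E1]] _ [s2 [H2 E2]]].
    + exists (Lf b). split; [right; apply HlB, Hb|reflexivity].
    + exists (Lf one). split; [left|]; reflexivity.
    + exists (Nd s1 s2). simpl. split; [tauto|congruence].
  - intros [s [Hs <-]]. induction s as [a|l IHl r IHr]; simpl in *.
    + destruct Hs as [<-|Hb]; [apply gsg_one|apply gsg_base, HlB, Hb].
    + apply gsg_mul; tauto.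
Qed.

Lemma lp_context p : lp_over (G_B mul one B) p ->
  exists C, ctx_lab labels C /\
    forall s, tree_eval mul (fill C s) = lp_eval mul p (tree_eval mul s).
Proof.
  induction p as [|c p IH|p IH c]; simpl.
  - intros _. exists Hole. split; reflexivity.
  - intros [Hc Hp]. destruct (IH Hp) as [C [HC EC]].
    destruct (proj1 (G_B_iff_tree c) Hc) as [t [Ht <-]].
    exists (CtxL t C). simpl. split; [tauto|]. intro s. rewrite EC. reflexivity.
  - intros [Hp Hc]. destruct (IH Hp) as [C [HC EC]].
    destruct (proj1 (G_B_iff_tree c) Hc) as [t [Ht <-]].
    exists (CtxR C t). simpl. split; [tauto|]. intro s. rewrite EC. reflexivity.
Qed.

(* Kruskal's theorem gives a finite basis of the trees with value below [b]. *)
Lemma bounded_fill_upset b : exists K, forall C, ctx_lab labels C ->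
  exists c L, incl L K /\ forall s, lab labels s ->
    (rle meet (tree_eval mul (fill C s)) b <-> upset c L s).
Proof.
  destruct (finite_basis _ (kruskal labels)
              (fun s => lab labels s /\ rle meet (tree_eval mul s) b))
    as [M [HM HMbasis]]; [tauto|].
  exists (flat_map (@subtrees A) M). intros C HC.
  destruct (covers_fill_upset C M) as [c [L [HL E]]].
  exists c, L. split; [exact HL|]. intros s Hs. rewrite <- E. split.
  - intro Hle. apply HMbasis. split; [apply lab_fill|]; assumption.
  - intros [m [Hm Hemb]].
    eapply (rle_trans HA); [apply (emb_eval_antitone HA Hint Hemb)|apply HM, Hm].
Qed.

Lemma basic_condition_upset : exists AS, forall u b,
  lp_over (G_B mul one B) u -> B b ->
  exists c L, incl L AS /\ forall s, lab labels s ->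
    (rle meet (lp_eval mul u (tree_eval mul s)) b <-> upset c L s).
Proof.
  destruct (list_choice (fun b K => forall C, ctx_lab labels C ->
      exists c L, incl L K /\ forall s, lab labels s ->
        (rle meet (tree_eval mul (fill C s)) b <-> upset c L s)) lB)
    as [AS HAS]; [intros b _; apply bounded_fill_upset|].
  exists AS. intros u b Hu Hb.
  destruct (lp_context _ Hu) as [C [HC EC]].
  destruct (HAS b (proj1 (HlB b) Hb)) as [K [HK HKAS]].
  destruct (HK C HC) as [c [L [HL E]]].
  exists c, L. split; [exact (incl_tran HL HKAS)|]. intros s Hs. rewrite <- EC. apply E, Hs.
Qed.

Lemma frame_basic_sets : exists l, forall t, T_B mul one B t ->
  exists Y, In Y l /\ forall x, G_B mul one B x /\ N_B meet mul x t <-> Y x.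
Proof.
  destruct basic_condition_upset as [AS HAS].
  set (covered := fun L x =>
    G_B mul one B x /\ exists s, lab labels s /\ tree_eval mul s = x /\ covers L s).
  exists (G_B mul one B :: map covered (sublists AS)).
  intros [u b] [Hu Hb]. unfold N_B. simpl in *.
  destruct (HAS u b Hu Hb) as [c [L [HL Hkey]]].
  destruct (classic c) as [Hc|Hc].
  - exists (G_B mul one B). split; [left; reflexivity|].
    intro x. split; [tauto|]. intro Hx. split; [exact Hx|].
    destruct (proj1 (G_B_iff_tree x) Hx) as [s [Hs <-]]. apply Hkey; [exact Hs|left; exact Hc].
  - destruct (sublists_select AS (fun m => In m L)) as [L' [HL' HL'iff]].
    assert (Hcov : forall s, covers L s <-> covers L' s).
    { intro s. unfold covers. split; intros [m [Hm He]]; exists m; split; try exact He;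
        [apply HL'iff; split; [apply HL|]|apply HL'iff]; assumption. }
    exists (covered L'). split; [right; exact (in_map covered _ _ HL')|].
    intro x. split.
    + intros [Hx Hle]. split; [exact Hx|].
      destruct (proj1 (G_B_iff_tree x) Hx) as [s [Hs <-]].
      exists s. split; [exact Hs|split; [reflexivity|]].
      apply Hcov. destruct (proj1 (Hkey s Hs) Hle); [contradiction|assumption].
    + intros [Hx [s [Hs [<- Hcs]]]]. split; [exact Hx|].
      apply Hkey; [exact Hs|right; apply Hcov, Hcs].
Qed.

End Frame.

Theorem mainTheorem6 (A : Type) (meet join mul ldiv rdiv : A -> A -> A) (one : A)
  (bang : A -> A)
  (HA : is_interior_rlu_groupoid meet join mul ldiv rdiv one bang)
  (Hint : integral meet one)
  (B : A -> Prop) (HB : finite_set B) :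
  FplusAB_finite meet mul one B.
Proof.
  destruct HB as [lB HlB].
  destruct (frame_basic_sets HA Hint B lB HlB) as [l Hl].
  exact (finitely_many_closed_of_basic _ _ _ l Hl).
Qed.
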